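(* Let $G$ be a connected graph with girth at least $5$, let $w\in V(G)$, and let $T$ be a breadth-first spanning tree of $G$ rooted at $w$, with vertex order $\sigma$. Let $\sigma'$ be a non-empty prefix of $\sigma$, let $\varphi'$ be a proper coloring of the subgraph induced by $\sigma'$, and let $\varphi$ be a greedy coloring of $G$ with respect to $\sigma$ and $\varphi'$. If $\varphi$ fixes each vertex of $\sigma'$, then $\varphi$ is a proper distinguishing coloring of $G$.
   Context: A coloring of $G$ is a map $\varphi:V(G)\to\mathbb{Z}_{>0}$; it is proper if adjacent vertices get different colors. A vertex $u$ is fixed by $\varphi$ if every automorphism $f$ of $G$ with $\varphi(f(v))=\varphi(v)$ for all $v$ satisfies $f(u)=u$. A coloring is distinguishing if it fixes every vertex, i.e. the only color-preserving automorphism is the identity. In a breadth-first spanning tree $T$ rooted at $w$, $\sigma$ is the order in which vertices are visited by the breadth-first search (so $w$ is first and parents precede children); each vertex $v\neq w$ has a parent in $T$, and the siblings of $v$ are the other children of its parent. For $v\in V(G)$, $\sigma_v$ denotes the set of vertices preceding $v$ in $\sigma$; a prefix $\sigma'$ of $\sigma$ is identified with its set of vertices. Greedy coloring with respect to $\sigma$ and $\varphi'$: extend $\varphi'$ to $\varphi$ by coloring each $v\in\sigma\setminus\sigma'$ in the order $\sigma$ as follows. (i) If $v$ has a neighbor in $\sigma_v$ other than its parent, then $\varphi(v)$ is the smallest positive integer not used on $N(v)\cap\sigma_v$. (ii) Otherwise, $\varphi(v)$ is the smallest positive integer not used on $\sigma_v\cap S_v$, where $S_v$ is the set consisting of the parent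 and the siblings of $v$. *)

From mathcomp Require Import all_boot fingroup perm.
Set Implicit Arguments. Unset Strict Implicit. Unset Printing Implicit Defensive.

Section Defs.
Variable V : finType.

Definition simple_graph (e : rel V) : Prop :=
  symmetric e /\ irreflexive e.

Definition connected_graph (e : rel V) : Prop :=
  forall x y : V, connect e x y.

Definition girth_ge5 (e : rel V) : Prop :=
  (forall a b c : V, ~ [&& e a b, e b c & e c a]) /\
  (forall a b c d : V, a != c -> b != d ->
       ~ [&& e a b, e b c, e c d & e d a]).

(* sigma is a breadth-first search order of the whole vertex set starting at w,
   and par is the parent function of the associated BFS spanning tree T:
   the parent of v <> w is its earliest-visited neighbour, which precedes v,
   and the order of discovery is monotone in the order of the parents. *)
Definition bfs_tree (e : rel V) (w : V) (sigma : seq V) (par : V -> V) : Prop :=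
  [/\ [/\ uniq sigma, (forall v : V, v \in sigma), head w sigma = w & sigma != [::]],
      (forall v : V, v != w ->
          [/\ e (par v) v, index (par v) sigma < index v sigma &
              forall u : V, e u v -> index (par v) sigma <= index u sigma]) &
      (forall u v : V, u != w -> v != w -> index u sigma < index v sigma ->
          index (par u) sigma <= index (par v) sigma)].

Definition before (sigma : seq V) (v : V) : seq V := take (index v sigma) sigma.

Definition least_missing (c : nat) (s : seq nat) : Prop :=
  [/\ 0 < c, c \notin s & forall d : nat, 0 < d < c -> d \in s].

Definition greedy_coloring (e : rel V) (w : V) (sigma : seq V) (par : V -> V)
    (k : nat) (phi' phi : V -> nat) : Prop :=
  (forall v : V, v \in take k sigma -> phi v = phi' v) /\
  (forall v : V, v \in drop k sigma ->
     let sv := before sigma v in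
     if has (fun u => e u v && (u != par v)) sv then
       least_missing (phi v) [seq phi u | u <- sv & e u v]
     else
       (* S_v = parent of v together with the siblings of v *)
       least_missing (phi v)
         [seq phi u | u <- sv & (u == par v) || ((u != w) && (par u == par v))]).

Definition proper_coloring (e : rel V) (phi : V -> nat) : Prop :=
  forall x y : V, e x y -> phi x != phi y.

Definition automorphism (e : rel V) (f : {perm V}) : Prop :=
  forall x y : V, e (f x) (f y) = e x y.

Definition color_preserving (phi : V -> nat) (f : {perm V}) : Prop :=
  forall v : V, phi (f v) = phi v.

Definition fixes (e : rel V) (phi : V -> nat) (u : V) : Prop :=
  forall f : {perm V}, automorphism e f -> color_preserving phi f -> f u = u.

Definition distinguishing (e : rel V) (phi : V -> nat) : Prop :=
  forall u : V, fixes e phi u.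

End Defs.

(** Positivity and properness are immediate from the greedy rule.  For
    distinctness, induct along [sigma]: let [f] be a colour-preserving
    automorphism fixing every vertex before [v], and suppose [u := f v] comes
    after [v].  Then [u] and [v] have the same earlier neighbours.  A second
    earlier neighbour of [v] besides its parent would close a 4-cycle, so [v]
    and [u] are siblings; any earlier neighbour of [u] other than the common
    parent would then close a triangle.  Hence [u] is coloured by rule (ii),
    which avoids the colour of its earlier sibling [v] -- contradicting
    [phi u = phi v]. *)
From mathcomp Require Import all_boot fingroup perm.

Set Implicit Arguments.
Unset Strict Implicit.
Unset Printing Implicit Defensive.

Section BfsTree.
Variables (V : finType) (e : rel V) (w : V) (sigma : seq V) (par : V -> V).
Hypothesis bfs : bfs_tree e w sigma par.

Local Notation idx x := (index x sigma).

Lemma mem_sigma v : v \in sigma.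
Proof. by case: bfs => -[]. Qed.

Lemma index_sigma_inj : injective (index ^~ sigma).
Proof. by move=> x y; apply: index_inj (mem_sigma x) (mem_sigma y). Qed.

Lemma index_root : idx w = 0.
Proof.
case: bfs => -[_ _]; case: (sigma) => [|a s] //= -> _ _ _.
by rewrite eqxx.
Qed.

Lemma index_gt0 v : (0 < idx v) = (v != w).
Proof. by rewrite lt0n -index_root (inj_eq index_sigma_inj). Qed.

Lemma neq_root_index_le v x : v != w -> idx v <= idx x -> x != w.
Proof. by rewrite -!index_gt0 => /leq_trans; apply. Qed.

Lemma mem_before x v : (x \in before sigma v) = (idx x < idx v).
Proof. exact/in_take/mem_sigma. Qed.

Lemma mem_take_sigma k x : (x \in take k sigma) = (idx x < k).
Proof. exact/in_take/mem_sigma. Qed.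

Lemma mem_drop_sigma k x : k <= idx x -> x \in drop k sigma.
Proof.
move=> le_kx; move: (mem_sigma x).
by rewrite -{1}(cat_take_drop k sigma) mem_cat mem_take_sigma ltnNge le_kx.
Qed.

Lemma par_adj v : v != w -> e (par v) v.
Proof. by case: bfs => _ /(_ v) Hpar _ /Hpar[]. Qed.

Lemma index_par_lt v : v != w -> idx (par v) < idx v.
Proof. by case: bfs => _ /(_ v) Hpar _ /Hpar[]. Qed.

Lemma index_par_min u v : v != w -> e u v -> idx (par v) <= idx u.
Proof. by case: bfs => _ /(_ v) Hpar _ /Hpar[_ _]; apply. Qed.

Lemma index_par_mono u v :
  u != w -> v != w -> idx u <= idx v -> idx (par u) <= idx (par v).
Proof.
case: bfs => _ _ Hmono uw vw.
by rewrite leq_eqVlt => /predU1P[/index_sigma_inj-> //|]; apply: Hmono.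
Qed.

Lemma par_between u v x :
  v != w -> idx v <= idx x <= idx u -> par u = par v -> par x = par v.
Proof.
move=> vw /andP[le_vx le_xu] puv.
have xw := neq_root_index_le vw le_vx.
have uw := neq_root_index_le xw le_xu.
apply: index_sigma_inj; apply/eqP.
by rewrite eqn_leq -{1}puv index_par_mono ?index_par_mono.
Qed.

Definition has_cross_edge v :=
  has (fun u => e u v && (u != par v)) (before sigma v).

Lemma earlier_neighbour_par v z :
  ~~ has_cross_edge v -> idx z < idx v -> e z v -> z = par v.
Proof.
move=> /hasPn/(_ z) + lt_zv ezv.
by rewrite mem_before lt_zv ezv negbK => /(_ isT)/eqP.
Qed.

Section Girth5.
Hypotheses (e_sym : symmetric e) (girth : girth_ge5 e).

Section SameEarlierNeighbours.
Variables u v : V.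
Hypotheses (vw : v != w) (lt_vu : idx v < idx u).
Hypothesis same_nbrs : forall z, idx z < idx v -> e z u = e z v.

Let u_neq_v : u != v.
Proof. by apply: contraTneq lt_vu => ->; rewrite ltnn. Qed.

Let par_v_adj_u : e (par v) u.
Proof. by rewrite same_nbrs ?par_adj ?index_par_lt. Qed.

(* An earlier neighbour [y != par v] of [v] would close the 4-cycle
   [par v, v, y, u]. *)
Lemma same_earlier_neighbours_no_cross_edge : ~~ has_cross_edge v.
Proof.
apply/negP => /hasP[y]; rewrite mem_before => lt_yv /andP[eyv ypv].
apply: (girth.2 (par v) v y u); rewrite 1?eq_sym //.
by rewrite par_adj // [e v y]e_sym same_nbrs // eyv [e u _]e_sym par_v_adj_u.
Qed.

Lemma same_earlier_neighbours_par : par u = par v.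
Proof.
have uw := neq_root_index_le vw (ltnW lt_vu).
have lt_puv : idx (par u) < idx v.
  exact: leq_ltn_trans (index_par_min uw par_v_adj_u) (index_par_lt vw).
apply: (earlier_neighbour_par same_earlier_neighbours_no_cross_edge lt_puv).
by rewrite -same_nbrs // par_adj.
Qed.

(* An earlier neighbour [x != par u] of [u] cannot precede [v] (it would be a
   second earlier neighbour of [v]); so by monotonicity of [par] it is a
   sibling of [u] and closes the triangle [par v, x, u]. *)
Lemma same_earlier_neighbours_later_no_cross_edge : ~~ has_cross_edge u.
Proof.
have tree_v := same_earlier_neighbours_no_cross_edge.
apply/negP => /hasP[x]; rewrite mem_before same_earlier_neighbours_par.
move=> lt_xu /andP[exu xpv]; case: (ltnP (idx x) (idx v)) => [lt_xv|le_vx].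
  have exv : e x v by rewrite -same_nbrs.
  by rewrite -(earlier_neighbour_par tree_v lt_xv exv) eqxx in xpv.
have pxv : par x = par v.
  by apply: (par_between vw _ same_earlier_neighbours_par); rewrite le_vx ltnW.
have xw := neq_root_index_le vw le_vx.
apply: (girth.1 (par v) x u).
by rewrite -{1}pxv par_adj // exu [e u _]e_sym par_v_adj_u.
Qed.

End SameEarlierNeighbours.
End Girth5.

Section Greedy.
Variables (k : nat) (phi' phi : V -> nat).
Hypothesis greedy : greedy_coloring e w sigma par k phi' phi.

Definition forbidden_colors v :=
  if has_cross_edge v then [seq phi u | u <- before sigma v & e u v]
  else [seq phi u | u <- before sigma v
                   & (u == par v) || ((u != w) && (par u == par v))].

Lemma greedy_prefix v : idx v < k -> phi v = phi' v.
Proof. by case: greedy => Hpre _; rewrite -mem_take_sigma; apply: Hpre. Qed.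

Lemma greedy_least_missing v :
  k <= idx v -> least_missing (phi v) (forbidden_colors v).
Proof.
case: greedy => _ Hgr /mem_drop_sigma /Hgr /=.
by rewrite /forbidden_colors -/(has_cross_edge v); case: has_cross_edge.
Qed.

Lemma mem_forbidden_colors_adj v x :
  idx x < idx v -> e x v -> phi x \in forbidden_colors v.
Proof.
move=> lt_xv exv; rewrite /forbidden_colors; case: ifP => [_|/negbT tree_v].
  by rewrite map_f // mem_filter exv mem_before.
have pxv := earlier_neighbour_par tree_v lt_xv exv.
by rewrite map_f // mem_filter mem_before lt_xv pxv eqxx.
Qed.

Lemma mem_forbidden_colors_sibling v x :
  ~~ has_cross_edge v -> idx x < idx v -> x != w -> par x = par v ->
  phi x \in forbidden_colors v.
Proof.
move=> tree_v lt_xv xw pxv; rewrite /forbidden_colors (negbTE tree_v).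
by rewrite map_f // mem_filter mem_before lt_xv xw pxv eqxx orbT.
Qed.

Lemma greedy_gt0 v : (forall x, idx x < k -> 0 < phi' x) -> 0 < phi v.
Proof.
move=> pos'; case: (ltnP (idx v) k) => [lt_vk|/greedy_least_missing[] //].
by rewrite greedy_prefix ?pos'.
Qed.

Lemma greedy_proper :
  (forall x y, idx x < k -> idx y < k -> e x y -> phi' x != phi' y) ->
  simple_graph e -> proper_coloring e phi.
Proof.
move=> proper' [e_sym e_irr] x y.
wlog lt_xy : x y / idx x < idx y => [Hwlog exy|exy].
  case: (ltngtP (idx x) (idx y)) => [|lt_yx|/index_sigma_inj eq_xy].
  - by move/Hwlog; apply.
  - by rewrite eq_sym Hwlog // e_sym.
  - by move: exy; rewrite eq_xy e_irr.
case: (ltnP (idx y) k) => [lt_yk|le_ky].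
  by rewrite !greedy_prefix ?proper' // (ltn_trans lt_xy).
case: (greedy_least_missing le_ky) => _ + _; apply: contraNneq => <-.
exact: mem_forbidden_colors_adj.
Qed.

Lemma greedy_fixes_next (f : {perm V}) v :
  symmetric e -> girth_ge5 e ->
  automorphism e f -> color_preserving phi f ->
  v != w -> k <= idx v -> (forall z, idx z < idx v -> f z = z) -> f v = v.
Proof.
move=> e_sym girth aut cp vw le_kv fixed_before.
case: (ltngtP (idx (f v)) (idx v)) => [/fixed_before/perm_inj //|lt_vu|];
  last exact: index_sigma_inj.
have same_nbrs z : idx z < idx v -> e z (f v) = e z v.
  by move=> lt_zv; rewrite -{1}(fixed_before z lt_zv) aut.
have tree_u :=
  same_earlier_neighbours_later_no_cross_edge e_sym girth vw lt_vu same_nbrs.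
have puv := same_earlier_neighbours_par e_sym girth vw lt_vu same_nbrs.
case: (greedy_least_missing (leq_trans le_kv (ltnW lt_vu))) => _ + _.
by rewrite cp mem_forbidden_colors_sibling.
Qed.

End Greedy.
End BfsTree.

Theorem lemma2 (V : finType) (e : rel V) (w : V) (sigma : seq V) (par : V -> V)
    (k : nat) (phi' phi : V -> nat) :
  simple_graph e -> connected_graph e -> girth_ge5 e ->
  bfs_tree e w sigma par ->
  0 < k <= size sigma ->
  (forall v : V, v \in take k sigma -> 0 < phi' v) ->
  (forall x y : V, x \in take k sigma -> y \in take k sigma ->
      e x y -> phi' x != phi' y) ->
  greedy_coloring e w sigma par k phi' phi ->
  (forall u : V, u \in take k sigma -> fixes e phi u) ->
  (forall v : V, 0 < phi v) /\ proper_coloring e phi /\ distinguishing e phi.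
Proof.
move=> simple _ girth bfs /andP[k_gt0 _] pos' proper' greedy fixed_prefix.
have mem_prefix := mem_take_sigma bfs k.
split; [|split].
- move=> v; apply: (greedy_gt0 bfs greedy) => x.
  by rewrite -mem_prefix; apply: pos'.
- apply: (greedy_proper bfs greedy) simple => x y.
  by rewrite -!mem_prefix; apply: proper'.
move=> u0 f aut cp; have [n] := ubnP (index u0 sigma).
elim: n u0 => // n IH v /ltnSE le_vn.
case: (ltnP (index v sigma) k) => [lt_vk|le_kv].
  by apply: fixed_prefix aut cp; rewrite mem_prefix.
have vw : v != w by rewrite -(index_gt0 bfs) (leq_trans k_gt0).
have [e_sym _] := simple.
apply: (greedy_fixes_next bfs greedy e_sym girth aut cp vw le_kv).
by move=> z lt_zv; apply: IH (leq_trans lt_zv le_vn).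
Qed.
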